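(* (a) For every $L\in\mathbb{N}$, $\mathcal{C}(L+1)-\mathcal{C}(L)\ge 2$. (b) For every $n\ge 2$ and every $L\in\mathbb{N}$ with $2^n\le L\le 2^n+2^{n-1}-1$, $\mathcal{C}(L+1)-\mathcal{C}(L)\ge 3$.
   Context: Let $\mathcal{A}=\{a,x,y,z\}$ and let $\tau$ be the substitution (monoid morphism on finite words over $\mathcal{A}$) defined by $\tau(a)=axa$, $\tau(x)=y$, $\tau(y)=z$, $\tau(z)=x$. For a finite word $w$, $\mathrm{Sub}(w)$ denotes the set of finite (contiguous) subwords of $w$. Let $\mathrm{Sub}_\tau=\bigcup_{s\in\mathcal{A},\,n\in\mathbb{N}\cup\{0\}}\mathrm{Sub}(\tau^n(s))$. The word complexity is $\mathcal{C}(L)=$ the number of elements of $\mathrm{Sub}_\tau$ of length $L$. *)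

From HB Require Import structures.
From mathcomp Require Import all_boot.
From Stdlib Require Import ClassicalEpsilon.
Set Implicit Arguments. Unset Strict Implicit. Unset Printing Implicit Defensive.

Inductive letter := La | Lx | Ly | Lz.

Definition letter_to (c : letter) : 'I_4 :=
  match c with La => inord 0 | Lx => inord 1 | Ly => inord 2 | Lz => inord 3 end.
Definition letter_of (i : 'I_4) : letter :=
  match val i with 0 => La | 1 => Lx | 2 => Ly | _ => Lz end.
Lemma letter_toK : cancel letter_to letter_of.
Proof. by case; rewrite /letter_of /= inordK. Qed.

HB.instance Definition _ := Finite.copy letter (can_type letter_toK).

Definition tau_letter (c : letter) : seq letter :=
  match c with
  | La => [:: La; Lx; La]
  | Lx => [:: Ly]
  | Ly => [:: Lz]
  | Lz => [:: Lx]
  end.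
Definition tau (w : seq letter) : seq letter := flatten (map tau_letter w).

Definition in_Sub_tau (w : seq letter) : Prop :=
  exists (s : letter) (n : nat), infix w (iter n tau [:: s]).

Definition in_Sub_tau_b (w : seq letter) : bool :=
  if excluded_middle_informative (in_Sub_tau w) then true else false.

Definition complexity (L : nat) : nat :=
  #|[set t : L.-tuple letter | in_Sub_tau_b t]|.

From mathcomp Require Import all_boot zify.
From Stdlib Require Import ClassicalEpsilon.
Set Implicit Arguments. Unset Strict Implicit. Unset Printing Implicit Defensive.

(* tau^(n+1)(a) = tau^n(a) c_n tau^n(a), where c_n = tau^n(x) runs 3-periodically
   through x, y, z.  Hence Sub_tau is the set of factors of the words tau^n(a),
   and s c_k p is a factor whenever s is a suffix and p a prefix of some
   tau^n(a): pick N >= n with N = k mod 3 and look inside tau^(N+1)(a).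
   Since factors are closed under prefixes and every factor extends to the
   right, C(L+1) - C(L) is the sum over factors w of length L of (number of
   right extensions of w) - 1.  The length-L suffix of tau^L(a) extends by x, y
   and z, which gives (a).  For 2^n <= L < 2^n + 2^(n-1) the length-L suffix of
   tau^(n-2)(a) c_(n-2) tau^(n-1)(a) is a second word, extending by c_(n-2) and
   c_(n-1); it differs from the length-L suffix of tau^n(a), which ends in
   c_(n-1) tau^(n-1)(a), and this gives (b). *)

Section Lastn.
Variable T : Type.
Implicit Types s t : seq T.

Definition lastn n s := drop (size s - n) s.

Lemma size_lastn n s : n <= size s -> size (lastn n s) = n.
Proof. by rewrite size_drop; lia. Qed.

Lemma lastn_size_cat s t : lastn (size t) (s ++ t) = t.
Proof. by rewrite /lastn size_cat addnK drop_size_cat. Qed.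

Lemma lastn_lastn m n s : m <= n -> lastn m (lastn n s) = lastn m s.
Proof. by move=> le_mn; rewrite /lastn size_drop drop_drop; congr drop; lia. Qed.

End Lastn.

Section SuffixPrefix.
Variable T : eqType.
Implicit Types s t : seq T.

Lemma suffix_lastn n s : suffix (lastn n s) s.
Proof. exact: suffix_drop. Qed.

Lemma infix_cat_suffix_prefix s1 s2 t1 t2 :
  suffix s1 t1 -> prefix s2 t2 -> infix (s1 ++ s2) (t1 ++ t2).
Proof.
by move=> /suffixP [u ->] /prefixP [v ->]; rewrite -catA (catA s1) infix_infix.
Qed.

End SuffixPrefix.

Section TupleRcons.
Variables (T : Type) (n : nat).

Definition tuple_init (e : n.+1.-tuple T) : n.-tuple T :=
  [tuple of belast (thead e) (behead e)].
Definition tuple_last (e : n.+1.-tuple T) : T := last (thead e) (behead e).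

Lemma tuple_initK :
  cancel (fun e => (tuple_init e, tuple_last e)) (fun p => [tuple of rcons p.1 p.2]).
Proof.
by move=> e; apply: val_inj; rewrite /= -lastI; exact: (esym (congr1 val (tuple_eta e))).
Qed.

Lemma tuple_rconsK :
  cancel (fun p : n.-tuple T * T => [tuple of rcons p.1 p.2])
         (fun e => (tuple_init e, tuple_last e)).
Proof.
move=> [w d]; set e := [tuple of rcons w d].
have /rcons_inj [init_e ->] : rcons (tuple_init e) (tuple_last e) = rcons w d.
  by rewrite /= -lastI; exact: (esym (congr1 val (tuple_eta e))).
by congr pair; apply: val_inj.
Qed.

End TupleRcons.

Lemma tau_cat s t : tau (s ++ t) = tau s ++ tau t.
Proof. by rewrite /tau map_cat flatten_cat. Qed.

Lemma iter_tau_cat n s t : iter n tau (s ++ t) = iter n tau s ++ iter n tau t.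
Proof. by elim: n => //= n ->; rewrite tau_cat. Qed.

Definition cyc (c : letter) : letter :=
  match c with La => La | Lx => Ly | Ly => Lz | Lz => Lx end.

Lemma iter_cyc_neqa n s : s != La -> iter n cyc s != La.
Proof.
move=> ns; elim: n => //= n.
by case: (iter n cyc s); rewrite ?eqxx // => _; apply/eqP.
Qed.

Lemma iter_tau_letter n s : s != La -> iter n tau [:: s] = [:: iter n cyc s].
Proof.
move=> ns; elim: n => //= n ->.
by have := iter_cyc_neqa n ns; case: (iter n cyc s); rewrite ?eqxx.
Qed.

Definition tau_a n := iter n tau [:: La].
Definition tau_x n := iter n cyc Lx.
Arguments tau_a n : simpl never.

Lemma tau_x_neqa n : tau_x n != La.
Proof. by apply: iter_cyc_neqa; apply/eqP. Qed.

Lemma tau_x_neqS n : tau_x n != tau_x n.+1.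
Proof.
rewrite /tau_x iterS; have := tau_x_neqa n; rewrite /tau_x.
by case: (iter n cyc Lx); rewrite ?eqxx // => _; apply/eqP.
Qed.

Lemma tau_x_surj d : d != La -> exists n, tau_x n = d.
Proof. by case: d; rewrite ?eqxx // => _; [exists 0 | exists 1 | exists 2]. Qed.

Lemma tau_x_add3m k t : tau_x (k + 3 * t) = tau_x k.
Proof.
rewrite /tau_x iterD; congr iter.
by elim: t => // t IHt; rewrite mulnS iterD IHt.
Qed.

Lemma tau_aS n : tau_a n.+1 = tau_a n ++ tau_x n :: tau_a n.
Proof.
rewrite /tau_a iterSr.
have -> : tau [:: La] = [:: La] ++ [:: Lx] ++ [:: La] by [].
by rewrite !iter_tau_cat (@iter_tau_letter n Lx) //; apply/eqP.
Qed.

Lemma size_tau_a n : (size (tau_a n)).+1 = 2 ^ n.+1.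
Proof. by elim: n => // n IHn; rewrite tau_aS size_cat /= expnS -IHn; lia. Qed.

Lemma leq_size_tau_a n : n <= size (tau_a n).
Proof. by rewrite -ltnS size_tau_a ltnW // ltn_expl. Qed.

Lemma prefix_tau_a i j : i <= j -> prefix (tau_a i) (tau_a j).
Proof.
move=> /subnKC <-; elim: (j - i) => [|k IHk]; first by rewrite addn0 prefix_refl.
by rewrite addnS tau_aS prefix_catl.
Qed.

Lemma suffix_tau_a i j : i <= j -> suffix (tau_a i) (tau_a j).
Proof.
move=> /subnKC <-; elim: (j - i) => [|k IHk]; first by rewrite addn0 suffix_refl.
by rewrite addnS tau_aS -cat1s catA suffix_catr.
Qed.

Lemma prefix_rcons_tau_a n : prefix (rcons (tau_a n) (tau_x n)) (tau_a n.+1).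
Proof. by rewrite tau_aS -cat_rcons prefix_prefix. Qed.

Lemma Sub_tauP w : reflect (exists k, infix w (tau_a k)) (in_Sub_tau_b w).
Proof.
rewrite /in_Sub_tau_b; case: excluded_middle_informative => [Sw | Nw].
  apply: ReflectT; case: Sw => s [n w_s].
  have [s_a|ns] := eqVneq s La; first by exists n; rewrite /tau_a -s_a.
  move: w_s; rewrite iter_tau_letter //.
  have [m <-] := tau_x_surj (iter_cyc_neqa n ns) => w_x.
  exists m.+1; apply: infix_trans w_x _.
  by rewrite infix1s tau_aS mem_cat inE eqxx orbT.
by apply: ReflectF => -[k w_k]; apply: Nw; exists La, k.
Qed.

Lemma Sub_tau_infix u w : infix u w -> in_Sub_tau_b w -> in_Sub_tau_b u.
Proof.
by move=> u_w /Sub_tauP [k w_k]; apply/Sub_tauP; exists k; apply: infix_trans w_k.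
Qed.

Lemma Sub_tau_suffix_cat_prefix s1 s2 i j k :
  suffix s1 (tau_a i) -> prefix s2 (tau_a j) -> in_Sub_tau_b (s1 ++ tau_x k :: s2).
Proof.
move=> s1_i s2_j; set K := k + 3 * (i + j).
apply/Sub_tauP; exists K.+1; rewrite tau_aS tau_x_add3m.
apply: infix_cat_suffix_prefix; first by apply: suffix_trans s1_i (suffix_tau_a _); lia.
by rewrite prefix_cons eqxx; apply: prefix_trans s2_j (prefix_tau_a _); lia.
Qed.

Lemma Sub_tau_rcons w : in_Sub_tau_b w -> exists d, in_Sub_tau_b (rcons w d).
Proof.
case/Sub_tauP=> k /infixP [p [[|d q] def_k]].
  exists (tau_x k); rewrite -cats1.
  apply: (@Sub_tau_suffix_cat_prefix _ _ k 0 _ _ (prefix0s _)).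
  by rewrite def_k cats0 suffix_suffix.
by exists d; apply/Sub_tauP; exists k; apply/infixP; exists p, q; rewrite def_k -cats1 -!catA.
Qed.

Definition right_ext (w : seq letter) : {set letter} :=
  [set d | in_Sub_tau_b (rcons w d)].

Lemma card_right_extE w : #|right_ext w| = in_Sub_tau_b w + (#|right_ext w|).-1.
Proof.
case Sw: (in_Sub_tau_b w).
  have [d Sd] := Sub_tau_rcons Sw.
  by rewrite add1n prednK //; apply/card_gt0P; exists d; rewrite inE.
rewrite (_ : right_ext w = set0) ?cards0 //; apply/setP => d; rewrite !inE.
by apply: contraFF Sw; apply: Sub_tau_infix (infix_rcons w d).
Qed.

Lemma complexityS_sum_right_ext L : complexity L.+1 = \sum_(w : L.-tuple letter) #|right_ext w|.
Proof.
rewrite /complexity -sum1_card.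
rewrite (reindex (fun p : L.-tuple letter * letter => [tuple of rcons p.1 p.2])) /=.
  under [RHS]eq_bigr => w _ do rewrite -sum1_card.
  by rewrite pair_big_dep; apply: eq_bigl => -[w d]; rewrite !inE.
by exists (fun e => (tuple_init e, tuple_last e)) => ? _; [exact: tuple_rconsK | exact: tuple_initK].
Qed.

Lemma complexityS L :
  complexity L.+1 = complexity L + \sum_(w : L.-tuple letter) (#|right_ext w|).-1.
Proof.
rewrite complexityS_sum_right_ext; under eq_bigr => w _ do rewrite card_right_extE.
rewrite big_split /=.
congr addn; rewrite /complexity -sum1_card [RHS]big_mkcond /=.
by apply: eq_bigr => w _; rewrite inE; case: in_Sub_tau_b.
Qed.

Lemma leq_complexityS L (ws : seq (seq letter)) :
  uniq ws -> all (fun w => size w == L) ws ->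
  complexity L + \sum_(w <- ws) (#|right_ext w|).-1 <= complexity L.+1.
Proof.
move=> uniq_ws size_ws; rewrite complexityS leq_add2l.
set ts := pmap (insub : _ -> option (L.-tuple letter)) ws.
have -> : ws = map val ts.
  rewrite pmap_filter; last exact: insubK.
  by symmetry; apply/all_filterP; rewrite (eq_all (isSome_insub _)).
rewrite big_map big_uniq ?pmap_sub_uniq // [X in _ <= X](bigID (mem ts)) /=.
exact: leq_addr.
Qed.

Lemma mem_right_ext_suffix s k n : suffix s (tau_a k) -> tau_x n \in right_ext s.
Proof.
by move=> s_k; rewrite inE -cats1 (Sub_tau_suffix_cat_prefix n s_k (prefix0s (tau_a 0))).
Qed.

Lemma card_right_ext_suffix s k : suffix s (tau_a k) -> 3 <= #|right_ext s|.
Proof.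
move=> s_k; have /card_uniqP card_xyz : uniq [:: tau_x 0; tau_x 1; tau_x 2].
  by rewrite /= !inE; apply/and3P; split; try apply/norP; try split; apply/eqP.
rewrite -[3]/(size [:: tau_x 0; tau_x 1; tau_x 2]) -card_xyz subset_leq_card //.
by apply/subsetP => d; rewrite mem_seq3 => /or3P [] /eqP ->; exact: mem_right_ext_suffix _ s_k.
Qed.

Lemma card_right_ext_cat_tau_a s m :
  suffix s (tau_a m) -> 2 <= #|right_ext (s ++ tau_x m :: tau_a m.+1)|.
Proof.
move=> s_m; apply: leq_trans (subset_leq_card (_ : [set tau_x m; tau_x m.+1] \subset _)).
  by rewrite cards2 tau_x_neqS.
apply/subsetP => _ /set2P [] ->; rewrite inE.
  have s_m1 : suffix (s ++ tau_x m :: tau_a m) (tau_a m.+1).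
    by rewrite tau_aS -!cat_rcons suffix_catl // eqxx suffix_rcons eqxx.
  rewrite {1}tau_aS rcons_cat /= rcons_cat rcons_cons -cat_cons catA.
  exact: Sub_tau_suffix_cat_prefix _ s_m1 (prefix_rcons_tau_a m).
by rewrite rcons_cat /=; exact: Sub_tau_suffix_cat_prefix _ s_m (prefix_rcons_tau_a m.+1).
Qed.

Lemma complexityS_ge2 L : complexity L + 2 <= complexity L.+1.
Proof.
set u := lastn L (tau_a L).
have size_u : size u = L by rewrite size_lastn // leq_size_tau_a.
have card_u : 3 <= #|right_ext u| := card_right_ext_suffix (suffix_lastn _ _).
have := @leq_complexityS L [:: u]; rewrite big_seq1 /= size_u eqxx.
by move=> /(_ isT isT); apply: leq_trans; rewrite leq_add2l -subn1 ltn_subRL.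
Qed.

Lemma complexityS_ge3 n L : 2 <= n -> 2 ^ n <= L -> L <= 2 ^ n + 2 ^ n.-1 - 1 ->
  complexity L + 3 <= complexity L.+1.
Proof.
case: n => [|[|m]] // _; rewrite succnK.
have := size_tau_a m; have := size_tau_a m.+1; have := size_tau_a m.+2.
rewrite !expnS => size2 size1 size0 lo_L hi_L.
set r := L - 2 * (2 * 2 ^ m).
set u := lastn L (tau_a m.+2).
set v := lastn r (tau_a m) ++ tau_x m :: tau_a m.+1.
have size_u : size u = L by rewrite size_lastn //; lia.
have size_v : size v = L by rewrite size_cat /= size_lastn /r; lia.
have neq_uv : u != v.
  set N := size (tau_x m :: tau_a m.+1).
  have N_L : N <= L by rewrite /N /=; lia.
  apply: contra_neq (tau_x_neqS m) => eq_uv.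
  have := congr1 (lastn N) eq_uv; rewrite /v lastn_size_cat /u lastn_lastn //.
  by rewrite tau_aS (_ : N = size (tau_x m.+1 :: tau_a m.+1)) // lastn_size_cat => -[].
have card_u : 3 <= #|right_ext u| := card_right_ext_suffix (suffix_lastn _ _).
have card_v : 2 <= #|right_ext v| := card_right_ext_cat_tau_a (suffix_lastn _ _).
have := @leq_complexityS L [:: u; v]; rewrite /= !big_cons big_nil inE neq_uv size_u size_v eqxx.
move=> /(_ isT isT); apply: leq_trans; rewrite leq_add2l addn0 -!subn1.
by apply: (@leq_add 2 1); rewrite ?subn_gt0 ?ltn_subRL.
Qed.

Theorem mainTheorem5 :
  (forall L : nat, 0 < L -> complexity L + 2 <= complexity L.+1) /\
  (forall n L : nat, 2 <= n -> 2 ^ n <= L -> L <= 2 ^ n + 2 ^ n.-1 - 1 ->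
     complexity L + 3 <= complexity L.+1).
Proof. by split=> [L _|]; [exact: complexityS_ge2 | exact: complexityS_ge3]. Qed.
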